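(* Let $C$ be an $\mathcal A^w_n$-module and let $y(C)=C\otimes R[y_1,\dots,y_n]$ with differential $D=d+\sum_i\xi_iy_i$. Then $\mathsf e:=u+\sum_{i=1}^n(x_i+x'_{w(i)})\,\partial/\partial y_i$ is a chain endomorphism of $y(C)$ of bidegree $(-2,4)$, i.e. $[D,\mathsf e]=0$.
   Context: $R$ is a commutative ring, $R^e_n=R[x_1,\dots,x_n,x'_1,\dots,x'_n]$ with all variables of quantum degree $2$, and $B_n=R^e_n/(\sum_ix_i^k-\sum_i(x'_i)^k,\ k=1,\dots,n)$. For $w\in\mathfrak S_n$, $\mathcal A^w_n$ is the graded-commutative $B_n$-algebra freely generated by $\xi_1,\dots,\xi_n$ of (homological, quantum) degree $(-1,2)$ and $u$ of degree $(-2,4)$ modulo the squares $\xi_i^2$, with the derivation $d$ of degree $1$ given by $d(B_n)=0$, $d(\xi_i)=x_i-x'_{w(i)}$, $d(u)=\sum_i(x_i+x'_{w(i)})\xi_i$. An $\mathcal A^w_n$-module is a bounded bigraded chain complex $(C,d)$ (in a graded $R^e_n$-linear additive category) with an action of $\mathcal A^w_n$ such that for each $a\in\mathcal A^w_n$ the action of $d(a)$ equals $[d,a]=da-(-1)^{|a|}ad$. $y(C)$ is the formal tensor product: $(y(C))^p=\bigoplus_{k\ge0}\bigoplus_{|\alpha|=k}C^{p-2k}y^\alpha$, each $y_i$ of bidegree $(2,-2)$; $\partial/\partial y_i$ sends $C^py^\alpha$ to $C^py^{\alpha-e_i}$ by multiplication by $\alpha_i$. Supercommutator $[a,b]=ab-(-1)^{|a||b|}ba$.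 *)

From HB Require Import structures.
From mathcomp Require Import all_boot all_order all_algebra all_fingroup.
From mathcomp Require Import mpoly.
Set Implicit Arguments. Unset Strict Implicit. Unset Printing Implicit Defensive.
Import Order.TTheory GRing.Theory Num.Theory.
Local Open Scope ring_scope.

(* R^e_n = R[x_1..x_n, x'_1..x'_n] is {mpoly R[n + n]}; x_i is the variable
   lshift n i, x'_i is the variable rshift n i. *)
Section Defs.
Variables (R : comRingType) (n : nat).

Definition xv (i : 'I_n) : {mpoly R[n + n]} := 'X_(lshift n i).
Definition xv' (i : 'I_n) : {mpoly R[n + n]} := 'X_(rshift n i).

(* A bounded bigraded complex C in a graded R^e_n-linear (pre)additive
   category, presented through the full subcategory on its terms C^j
   (j : int): Hom j k = Hom(C^j, C^k), an R^e_n-module, with R^e_n-bilinear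
   associative composition, identities ide j j (ide j k = 0 for j <> k, so
   that a "family" forall j k, Hom j k is a matrix of components), and a
   quantum grading predicate qdeg f q ("f is homogeneous of quantum degree q")
   compatible with composition and with x_i, x'_i of quantum degree 2.
   Boundedness: C^j is a zero object (id = 0) outside [lo, lo + len]. *)
Record gcx := GCx {
  Hom : int -> int -> lmodType {mpoly R[n + n]};
  comp : forall j k l : int, Hom k l -> Hom j k -> Hom j l;
  ide : forall j k : int, Hom j k;
  qdeg : forall j k : int, Hom j k -> int -> Prop;
  lo : int;
  len : nat;
  comp_assoc : forall j k l m (f : Hom l m) (g : Hom k l) (h : Hom j k),
    comp f (comp g h) = comp (comp f g) h;
  comp_ide_l : forall j k (f : Hom j k), comp (ide k k) f = f;
  comp_ide_r : forall j k (f : Hom j k), comp f (ide j j) = f;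
  ide_off : forall j k, j != k -> ide j k = 0;
  compDl : forall j k l (f f' : Hom k l) (g : Hom j k),
    comp (f + f') g = comp f g + comp f' g;
  compDr : forall j k l (f : Hom k l) (g g' : Hom j k),
    comp f (g + g') = comp f g + comp f g';
  compZl : forall j k l (r : {mpoly R[n + n]}) (f : Hom k l) (g : Hom j k),
    comp (r *: f) g = r *: comp f g;
  compZr : forall j k l (r : {mpoly R[n + n]}) (f : Hom k l) (g : Hom j k),
    comp f (r *: g) = r *: comp f g;
  qdeg0 : forall j k q, qdeg (0 : Hom j k) q;
  qdegD : forall j k (f g : Hom j k) q, qdeg f q -> qdeg g q -> qdeg (f + g) q;
  qdegN : forall j k (f : Hom j k) q, qdeg f q -> qdeg (- f) q;
  qdeg_comp : forall j k l (f : Hom k l) (g : Hom j k) q q',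
    qdeg f q -> qdeg g q' -> qdeg (comp f g) (q + q');
  qdeg_ide : forall j k, qdeg (ide j k) 0;
  qdegX : forall j k (f : Hom j k) q (i : 'I_(n + n)),
    qdeg f q -> qdeg ('X_i *: f) (q + 2);
  qdegC : forall j k (f : Hom j k) q (c : R), qdeg f q -> qdeg (c%:MP *: f) q;
  bounded : forall j : int, (j < lo) || (lo + len%:Z < j) -> ide j j = 0
}.

Definition cmap (C : gcx) := forall j k : int, Hom C j k.

Definition krange (C : gcx) : seq int :=
  [seq lo C + i%:Z | i <- iota 0 (len C).+1].

Definition ccomp (C : gcx) (F G : cmap C) : cmap C :=
  fun j l => \sum_(k <- krange C) comp (F k l) (G j k).

Definition chom (C : gcx) (F : cmap C) (m q : int) : Prop :=
  forall j k, (k != j + m -> F j k = 0) /\ qdeg (F j k) q.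

(* An A^w_n-module: a bounded complex (C, d) with the actions of the
   generators xi_i (bidegree (-1,2)) and u (bidegree (-2,4)) satisfying the
   defining relations of A^w_n (graded commutativity, xi_i^2 = 0, B_n acting
   through the R^e_n-linear structure) and [d, a] = d(a) on generators. *)
Record amod (w : {perm 'I_n}) := AMod {
  cx_of : gcx;
  dC : cmap cx_of;
  xiC : 'I_n -> cmap cx_of;
  uC : cmap cx_of;
  dC_hom : chom dC 1 0;
  xiC_hom : forall i, chom (xiC i) (-1) 2;
  uC_hom : chom uC (-2) 4;
  dC2 : forall j k, ccomp dC dC j k = 0;
  xiC_sq : forall i j k, ccomp (xiC i) (xiC i) j k = 0;
  xiC_anti : forall i i' j k,
    ccomp (xiC i) (xiC i') j k = - ccomp (xiC i') (xiC i) j k;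
  xiC_u : forall i j k, ccomp (xiC i) uC j k = ccomp uC (xiC i) j k;
  Bn_rel : forall m : nat, (0 < m <= n)%N -> forall j k,
    (\sum_i xv i ^+ m - \sum_i xv' i ^+ m) *: ide cx_of j k = 0;
  d_xi : forall i j k,
    ccomp dC (xiC i) j k + ccomp (xiC i) dC j k
    = (xv i - xv' (w i)) *: ide cx_of j k;
  d_u : forall j k,
    ccomp dC uC j k - ccomp uC dC j k
    = \sum_i (xv i + xv' (w i)) *: xiC i j k
}.

Definition mi := {ffun 'I_n -> nat}.
Definition msz (a : mi) : nat := (\sum_i a i)%N.
Definition munit (i : 'I_n) : mi := [ffun j => nat_of_bool (j == i)].
Definition madd (a b : mi) : mi := [ffun j => (a j + b j)%N].
Definition membed N (b : {ffun 'I_n -> 'I_N}) : mi := [ffun i => nat_of_ord (b i)].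

(* maps of y(C) = (+)_alpha C y^alpha, as matrices: F j k a b is the component
   C^j y^b -> C^k y^a (C^j y^b sits in bidegree shifted by (2|b|, -2|b|)). *)
Definition ymap (C : gcx) := forall (j k : int) (a b : mi), Hom C j k.

Definition yhom (C : gcx) (F : ymap C) (m q : int) : Prop :=
  forall j k a b,
    (k + 2 * (msz a)%:Z != j + 2 * (msz b)%:Z + m -> F j k a b = 0) /\
    qdeg (F j k a b) (q - 2 * (msz b)%:Z + 2 * (msz a)%:Z).

(* composition F o G of maps of y(C), G homogeneous of homological degree m:
   the intermediate multi-index b satisfies |b| <= |c| + |len + m| for every
   nonzero term, so the (column-finite) matrix product is this finite sum. *)
Definition ybound (C : gcx) (m : int) (c : mi) : nat :=
  (msz c + `|(len C)%:Z + m|).+1.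

Definition ycomp (C : gcx) (m : int) (F G : ymap C) : ymap C :=
  fun j l a c => \sum_(k <- krange C)
    \sum_(b : {ffun 'I_n -> 'I_(ybound C m c)})
      comp (F k l a (membed b)) (G j k (membed b) c).

Definition ysupcomm (C : gcx) (mF mG : int) (F G : ymap C) : ymap C :=
  fun j l a c => ycomp mG F G j l a c
    - ((-1) ^+ `|mF * mG|) *: ycomp mF G F j l a c.

Section YOps.
Variables (w : {perm 'I_n}) (M : amod w).

(* D = d + sum_i xi_i y_i *)
Definition yD : ymap (cx_of M) := fun j k a b =>
  (if a == b then dC M j k else 0)
  + \sum_i (if a == madd b (munit i) then xiC M i j k else 0).

(* e = u + sum_i (x_i + x'_{w(i)}) d/dy_i *)
Definition ye : ymap (cx_of M) := fun j k a b =>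
  (if a == b then uC M j k else 0)
  + \sum_i (if b == madd a (munit i)
            then ((xv i + xv' (w i)) *: ide (cx_of M) j k) *+ b i else 0).
End YOps.

End Defs.

From Pilot Require Import Defs.
From HB Require Import structures.
From mathcomp Require Import all_boot all_order all_algebra all_fingroup.
From mathcomp Require Import mpoly.
From mathcomp Require Import zify.
Set Implicit Arguments. Unset Strict Implicit. Unset Printing Implicit Defensive.
Import Order.TTheory GRing.Theory Num.Theory.
Local Open Scope ring_scope.

(* Since |D| |e| is even, [D, e] = De - eD, and it
   splits into four commutators.  [d, u] = sum_i X_i xi_i is a defining
   relation of A^w_n; [d, X_i d/dy_i] = 0 because X_i is central and d does not
   touch y; [xi_i y_i, u] = 0 because xi_i and u commute; and
   [xi_i y_i, X_i' d/dy_i'] = - delta_(i,i') X_i xi_i by the canonical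
   commutation relation [d/dy_i', y_i] = delta_(i,i').  The sum vanishes.
   In the matrix model of y(C), a product whose right factor is F, F y_i or
   F d/dy_i has a single intermediate multi-index, which reduces everything
   to composition in C. *)

Lemma if_sum (V : zmodType) I (r : seq I) (p : bool) (F : I -> V) :
  (if p then \sum_(i <- r) F i else 0) = \sum_(i <- r) (if p then F i else 0).
Proof. by case: p; rewrite // big1. Qed.

Section Composition.
Variables (R : comRingType) (n : nat) (C : gcx R n).
Local Notation H := (Defs.Hom C).
Local Notation cmp := (@Defs.comp _ _ C _ _ _).

Lemma comp0l j k l (g : H j k) : cmp (0 : H k l) g = 0.
Proof. by apply: (addrI (cmp 0 g)); rewrite -compDl !addr0. Qed.

Lemma comp0r j k l (f : H k l) : cmp f (0 : H j k) = 0.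
Proof. by apply: (addrI (cmp f 0)); rewrite -compDr !addr0. Qed.

Lemma comp_suml j k l I (r : seq I) (P : pred I) (F : I -> H k l) (g : H j k) :
  cmp (\sum_(i <- r | P i) F i) g = \sum_(i <- r | P i) cmp (F i) g.
Proof. by elim/big_rec2: _ => [|i x y _ <-]; rewrite ?comp0l ?compDl. Qed.

Lemma comp_sumr j k l I (r : seq I) (P : pred I) (F : I -> H j k) (f : H k l) :
  cmp f (\sum_(i <- r | P i) F i) = \sum_(i <- r | P i) cmp f (F i).
Proof. by elim/big_rec2: _ => [|i x y _ <-]; rewrite ?comp0r ?compDr. Qed.

Lemma comp_ifl j k l (b : bool) (f : H k l) (g : H j k) :
  cmp (if b then f else 0) g = if b then cmp f g else 0.
Proof. by case: b; rewrite ?comp0l. Qed.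

Lemma compMnl j k l m (f : H k l) (g : H j k) : cmp (f *+ m) g = cmp f g *+ m.
Proof. by elim: m => [|m IH]; rewrite ?mulr0n ?comp0l // !mulrS compDl IH. Qed.

Lemma compMnr j k l m (f : H k l) (g : H j k) : cmp f (g *+ m) = cmp f g *+ m.
Proof. by elim: m => [|m IH]; rewrite ?mulr0n ?comp0r // !mulrS compDr IH. Qed.

Lemma qdegMn j k (f : H j k) q m : qdeg f q -> qdeg (f *+ m) q.
Proof.
move=> fq; elim: m => [|m IH]; first by rewrite mulr0n; apply: qdeg0.
by rewrite mulrS; apply: qdegD.
Qed.

Lemma qdeg_sum j k I (r : seq I) (P : pred I) (F : I -> H j k) q :
  (forall i, P i -> qdeg (F i) q) -> qdeg (\sum_(i <- r | P i) F i) q.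
Proof.
move=> Fq; elim/big_rec: _ => [|i x Pi xq]; first exact: qdeg0.
exact: qdegD (Fq i Pi) xq.
Qed.

Lemma sum_comp_ifl j l (r : seq int) (p : bool) (F : forall k, H k l)
    (G : forall k, H j k) :
  \sum_(k <- r) cmp (if p then F k else 0) (G k)
  = if p then \sum_(k <- r) cmp (F k) (G k) else 0.
Proof. by rewrite if_sum; apply: eq_bigr => k _; rewrite comp_ifl. Qed.

Lemma krange_uniq : uniq (krange C).
Proof. by rewrite map_inj_uniq ?iota_uniq // => x y /addrI []. Qed.

Lemma mem_krange j : (j \in krange C) = (lo C <= j <= lo C + (len C)%:Z).
Proof.
apply/mapP/idP => [[i]|jC]; first by rewrite mem_iota add0n => /andP[_ ?] ->; lia.
by exists `|j - lo C|%N; rewrite ?mem_iota /=; lia.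
Qed.

(* When [j] lies outside [krange C], both sides vanish since C^j = 0. *)
Lemma sum_comp_ider j l (F : forall k, H k l) :
  \sum_(k <- krange C) cmp (F k) (ide C j k) = F j.
Proof.
have [jC|jNC] := boolP (j \in krange C).
  rewrite (bigD1_seq j jC krange_uniq) /= comp_ide_r big1 ?addr0 // => k kj.
  by rewrite ide_off 1?eq_sym // comp0r.
rewrite big1_seq => [|k /andP[_ kC]]; last first.
  by rewrite ide_off ?comp0r //; apply: contraNneq jNC => ->.
rewrite -(comp_ide_r (F j)) bounded ?comp0r //.
by move: jNC; rewrite mem_krange; lia.
Qed.

Lemma sum_comp_idel j l (F : forall k, H j k) :
  \sum_(k <- krange C) cmp (ide C k l) (F k) = F l.
Proof.
have [lC|lNC] := boolP (l \in krange C).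
  rewrite (bigD1_seq l lC krange_uniq) /= comp_ide_l big1 ?addr0 // => k kl.
  by rewrite ide_off // comp0l.
rewrite big1_seq => [|k /andP[_ kC]]; last first.
  by rewrite ide_off ?comp0l //; apply: contraNneq lNC => <-.
rewrite -(comp_ide_l (F l)) bounded ?comp0l //.
by move: lNC; rewrite mem_krange; lia.
Qed.

End Composition.

Section MultiIndices.
Variable n : nat.
Implicit Types (a b c : mi n) (i : 'I_n).

(* truncated subtraction: [msub c i = c] when [c i = 0] *)
Definition msub c i : mi n := [ffun x => (c x - (x == i))%N].

Lemma membed_inj N : injective (@membed n N).
Proof.
move=> b1 b2 /ffunP eq_b; apply/ffunP => i; apply: val_inj.
by have := eq_b i; rewrite !ffunE.
Qed.

Lemma msz_madd1 a i : msz (madd a (munit i)) = (msz a).+1.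
Proof.
rewrite /msz; under eq_bigr do rewrite !ffunE.
have sum_delta : (\sum_(x < n) (x == i) = 1)%N.
  by rewrite (bigD1 i) //= eqxx big1 ?addn0 // => x /negbTE->.
by rewrite big_split /= sum_delta addn1.
Qed.

Lemma leq_msz a i : (a i <= msz a)%N.
Proof. by rewrite /msz (bigD1 i) //= leq_addr. Qed.

Lemma madd1_neq a i : (a == madd a (munit i)) = false.
Proof.
by apply/negbTE/eqP => /ffunP /(_ i); rewrite !ffunE eqxx addn1 => /n_Sn.
Qed.

Lemma msub_madd1 a i : msub (madd a (munit i)) i = a.
Proof. by apply/ffunP => x; rewrite !ffunE addnK. Qed.

Lemma madd1_msub c i : (0 < c i)%N -> madd (msub c i) (munit i) = c.
Proof.
by move=> ci; apply/ffunP => x; rewrite !ffunE; case: eqP => [->|_] /=; lia.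
Qed.

Lemma madd1I i : injective (fun a : mi n => madd a (munit i)).
Proof.
move=> a b /ffunP eq_ab; apply/ffunP => x.
by have := eq_ab x; rewrite !ffunE => /addIn.
Qed.

Lemma eq_msub_madd1 a c i (i' : 'I_n) : (0 < c i)%N ->
  (a == madd (msub c i) (munit i')) = (madd c (munit i') == madd a (munit i)).
Proof.
move=> ci; apply/eqP/eqP => /ffunP eq_ac; apply/ffunP => x; have := eq_ac x;
  rewrite !ffunE; case: (eqVneq x i) => [->|]; case: (eqVneq x i') => //=; lia.
Qed.

Lemma eq_msub a c i : (0 < c i)%N -> (a == msub c i) = (c == madd a (munit i)).
Proof.
move=> ci; apply/eqP/eqP => /ffunP eq_ac; apply/ffunP => x; have := eq_ac x;
  rewrite !ffunE; case: (eqVneq x i) => [->|] /=; lia.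
Qed.

(* The weight [c i] kills the terms with [c i = 0], where [msub] truncates. *)
Lemma mulrn_if_msub (V : zmodType) (v : V) a c i :
  (if a == msub c i then v else 0) *+ c i
  = (if c == madd a (munit i) then v else 0) *+ c i.
Proof. by have [->|ci] := posnP (c i); rewrite ?mulr0n ?eq_msub. Qed.

Lemma mulrn_if_msub_madd1 (V : zmodType) (v : V) a c i (i' : 'I_n) :
  (if a == madd (msub c i) (munit i') then v else 0) *+ c i
  = (if madd c (munit i') == madd a (munit i) then v else 0) *+ c i.
Proof. by have [->|ci] := posnP (c i); rewrite ?mulr0n ?eq_msub_madd1. Qed.

(* The commutation relation [d/dy_i, y_i'] = delta_(i,i') on the monomials:
   [y_i' d/dy_i] sends y^c to c_i y^(c - e_i + e_i'), and [d/dy_i y_i']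
   sends it to (c + e_i')_i y^(c + e_i' - e_i). *)
Lemma ccr_coef (V : zmodType) (v : V) a c i (i' : 'I_n) :
  (if a == madd (msub c i) (munit i') then v else 0) *+ c i
  - (if madd c (munit i') == madd a (munit i) then v else 0)
      *+ madd c (munit i') i
  = if (i == i') && (a == c) then - v else 0.
Proof.
rewrite mulrn_if_msub_madd1 [madd c _ i]ffunE [munit i' i]ffunE mulrnDr opprD.
rewrite addrA subrr add0r -mulNrn.
case: (eqVneq i' i) => [->|_] /=; last by rewrite mulr0n.
by rewrite (inj_eq (@madd1I i)) eq_sym mulr1n; case: ifP; rewrite ?oppr0.
Qed.

Lemma ccr_sum (V : zmodType) (v : 'I_n -> 'I_n -> V) a c :
  \sum_i \sum_(i' < n)
      (if a == madd (msub c i) (munit i') then v i i' else 0) *+ c i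
  - \sum_(i' < n) \sum_i
      (if madd c (munit i') == madd a (munit i) then v i i' else 0)
        *+ madd c (munit i') i
  = - (if a == c then \sum_i v i i else 0).
Proof.
rewrite [Y in _ - Y]exchange_big -sumrB if_sum -sumrN /=.
apply: eq_bigr => i _; rewrite -sumrB (bigD1 i) //= ccr_coef eqxx /=.
rewrite big1 => [|i' i'i]; last by rewrite ccr_coef eq_sym (negbTE i'i).
by rewrite addr0; case: ifP; rewrite ?oppr0.
Qed.

End MultiIndices.

Section YMaps.
Variables (R : comRingType) (n : nat) (C : gcx R n).
Local Notation cmp := (@Defs.comp _ _ C _ _ _).

Definition ydiag (F : cmap C) : ymap C :=
  fun j k a b => if a == b then F j k else 0.

Definition ymul (i : 'I_n) (F : cmap C) : ymap C :=
  fun j k a b => if a == madd b (munit i) then F j k else 0.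

Definition yder (i : 'I_n) (F : cmap C) : ymap C :=
  fun j k a b => if b == madd a (munit i) then F j k *+ b i else 0.

Variables (m : int) (F : ymap C) (j l : int) (a c : mi n).

Lemma ycompDr (G G0 : ymap C) (Gs : 'I_n -> ymap C) :
    (forall j k b c, G j k b c = G0 j k b c + \sum_i Gs i j k b c) ->
  ycomp m F G j l a c = ycomp m F G0 j l a c + \sum_i ycomp m F (Gs i) j l a c.
Proof.
move=> eq_G; rewrite /ycomp.
under eq_bigr => k _ do under eq_bigr => b _ do rewrite eq_G compDr comp_sumr.
under eq_bigr do rewrite big_split /= exchange_big.
by rewrite big_split /= [in X in _ + X]exchange_big.
Qed.

Lemma ybound_gt (x : mi n) :
  (forall i, x i <= c i)%N -> forall i, (x i < ybound C m c)%N.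
Proof.
move=> le_xc i; rewrite ltnS (leq_trans (le_xc i)) //.
by rewrite (leq_trans (leq_msz c i)) ?leq_addr.
Qed.

Lemma ycomp_collapse (G : ymap C) (x : mi n) :
    (forall i, (x i < ybound C m c)%N) ->
    (forall k b, b != x -> cmp (F k l a b) (G j k b c) = 0) ->
  ycomp m F G j l a c = \sum_(k <- krange C) cmp (F k l a x) (G j k x c).
Proof.
move=> x_lt G0; apply: eq_bigr => k _.
pose bx : {ffun 'I_n -> 'I_(ybound C m c)} := [ffun i => Ordinal (x_lt i)].
have bxE : membed bx = x by apply/ffunP => i; rewrite !ffunE.
rewrite (bigD1 bx) //= bxE big1 ?addr0 // => b b_bx; apply: G0.
by apply: contraNneq b_bx => b_x; apply/eqP/(@membed_inj n); rewrite b_x bxE.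
Qed.

Lemma ycomp_ydiag (G : cmap C) :
  ycomp m F (ydiag G) j l a c = \sum_(k <- krange C) cmp (F k l a c) (G j k).
Proof.
rewrite (@ycomp_collapse _ c) => [||k b].
- by under eq_bigr do rewrite /ydiag eqxx.
- exact: ybound_gt.
- by rewrite /ydiag => /negbTE->; rewrite comp0r.
Qed.

Lemma ycomp_yder i (G : cmap C) :
  ycomp m F (yder i G) j l a c
  = (\sum_(k <- krange C) cmp (F k l a (msub c i)) (G j k)) *+ c i.
Proof.
rewrite (@ycomp_collapse _ (msub c i)) => [||k b]; first last.
- move=> b_x; rewrite /yder; case: eqP => [c_b|_]; last by rewrite comp0r.
  by move: b_x; rewrite c_b msub_madd1 eqxx.
- by apply: ybound_gt => x; rewrite ffunE leq_subr.
rewrite -sumrMnl; apply: eq_bigr => k _; rewrite /yder -compMnr.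
have [->|ci] := posnP (c i); first by rewrite !mulr0n if_same comp0r.
by rewrite madd1_msub ?eqxx.
Qed.

(* [ycomp m] only sums intermediate multi-indices below [ybound C m c]; the
   hypothesis leaves room for [c + e_i]. *)
Lemma ycomp_ymul i (G : cmap C) : (0 < absz ((len C)%:Z + m)%R)%N ->
  ycomp m F (ymul i G) j l a c
  = \sum_(k <- krange C) cmp (F k l a (madd c (munit i))) (G j k).
Proof.
move=> len_m.
rewrite (@ycomp_collapse _ (madd c (munit i))) => [||k b]; first last.
- by rewrite /ymul => /negbTE->; rewrite comp0r.
- move=> x; rewrite ffunE ffunE ltnS; have := leq_msz c x; lia.
by under eq_bigr do rewrite /ymul eqxx.
Qed.

End YMaps.

Arguments ycompDr {R n C m F j l a c G G0 Gs}.

Section AModule.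
Variables (R : comRingType) (n : nat) (w : {perm 'I_n}) (M : amod R w).
Local Notation C := (cx_of M).
Local Notation X i := (xv R i + xv' R (w i)).
Local Notation cmp := (@Defs.comp _ _ C _ _ _).

Lemma yD_split j k a b :
  yD M j k a b = ydiag (dC M) j k a b + \sum_i ymul i (xiC M i) j k a b.
Proof. by []. Qed.

Lemma ye_split j k a b :
  ye M j k a b
  = ydiag (uC M) j k a b + \sum_i yder i (fun j k => X i *: ide C j k) j k a b.
Proof. by []. Qed.

Lemma ye_hom : yhom (ye M) (-2) 4.
Proof.
move=> j k a b; rewrite /ye; case: (eqVneq a b) => [<-|ab].
  rewrite big1 ?addr0 => [|i _]; last by rewrite madd1_neq.
  have [uC0 uCq] := uC_hom M j k.
  split=> [jk|]; first by apply: uC0; lia.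
  by have -> : 4 - 2 * (msz a)%:Z + 2 * (msz a)%:Z = 4 by lia.
rewrite add0r; split=> [jk|].
  apply: big1 => i _; case: eqP => // b_ai.
  by rewrite ide_off ?scaler0 ?mul0rn //; move: jk; rewrite b_ai msz_madd1; lia.
apply: qdeg_sum => i _; case: eqP => [->|_]; last exact: qdeg0.
apply: qdegMn; rewrite msz_madd1.
have -> : 4 - 2 * (msz a).+1%:Z + 2 * (msz a)%:Z = 0 + 2 by lia.
by rewrite scalerDl; apply: qdegD; apply: qdegX; apply: qdeg_ide.
Qed.

Variables (j l : int) (a : mi n).

Lemma sum_comp_yD (b : mi n) (G : cmap C) :
  \sum_(k <- krange C) cmp (yD M k l a b) (G j k)
  = (if a == b then ccomp (dC M) G j l else 0)
  + \sum_i (if a == madd b (munit i) then ccomp (xiC M i) G j l else 0).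
Proof.
under eq_bigr do rewrite compDl comp_suml.
rewrite big_split /= sum_comp_ifl exchange_big /=.
by congr (_ + _); apply: eq_bigr => i _; rewrite sum_comp_ifl.
Qed.

Lemma sum_comp_ye (b : mi n) (G : cmap C) :
  \sum_(k <- krange C) cmp (ye M k l a b) (G j k)
  = (if a == b then ccomp (uC M) G j l else 0)
  + \sum_i (if b == madd a (munit i) then X i *: G j l else 0) *+ b i.
Proof.
under eq_bigr do rewrite compDl comp_suml.
rewrite big_split /= sum_comp_ifl exchange_big /=.
congr (_ + _); apply: eq_bigr => i _; rewrite sum_comp_ifl.
under eq_bigr do rewrite compMnl compZl.
by rewrite sumrMnl -scaler_sumr sum_comp_idel; case: ifP; rewrite ?mul0rn.
Qed.

Variable c : mi n.

Lemma ycomp_yD_ye :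
  ycomp (-2) (yD M) (ye M) j l a c
  = (if a == c then ccomp (dC M) (uC M) j l else 0)
  + \sum_i (if a == madd c (munit i) then ccomp (xiC M i) (uC M) j l else 0)
  + \sum_i (X i *: yD M j l a (msub c i)) *+ c i.
Proof.
rewrite (ycompDr ye_split) ycomp_ydiag sum_comp_yD; congr (_ + _).
apply: eq_bigr => i _; rewrite ycomp_yder.
by under eq_bigr do rewrite compZr; rewrite -scaler_sumr sum_comp_ider.
Qed.

Lemma ycomp_ye_yD :
  ycomp 1 (ye M) (yD M) j l a c
  = (if a == c then ccomp (uC M) (dC M) j l else 0)
  + \sum_i (if a == madd c (munit i) then ccomp (uC M) (xiC M i) j l else 0)
  + (\sum_i (if c == madd a (munit i) then X i *: dC M j l else 0) *+ c i
     + \sum_i \sum_i' (if madd c (munit i) == madd a (munit i')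
                       then X i' *: xiC M i j l else 0) *+ madd c (munit i) i').
Proof.
rewrite (ycompDr yD_split) ycomp_ydiag sum_comp_ye -addrACA -big_split.
by congr (_ + _); apply: eq_bigr => i _; rewrite ycomp_ymul ?sum_comp_ye //; lia.
Qed.

Lemma yD_ye_commute :
  ycomp (-2) (yD M) (ye M) j l a c - ycomp 1 (ye M) (yD M) j l a c = 0.
Proof.
have d_u : (if a == c then ccomp (dC M) (uC M) j l else 0)
           - (if a == c then ccomp (uC M) (dC M) j l else 0)
         = if a == c then \sum_i X i *: xiC M i j l else 0.
  by case: ifP; rewrite ?subrr ?d_u.
have xi_u :
    \sum_i (if a == madd c (munit i) then ccomp (xiC M i) (uC M) j l else 0)
  = \sum_i (if a == madd c (munit i) then ccomp (uC M) (xiC M i) j l else 0).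
  by apply: eq_bigr => i _; rewrite xiC_u.
have der : \sum_i (X i *: yD M j l a (msub c i)) *+ c i
   = \sum_i (if c == madd a (munit i) then X i *: dC M j l else 0) *+ c i
   + \sum_i \sum_i' (if a == madd (msub c i) (munit i')
                     then X i *: xiC M i' j l else 0) *+ c i.
  rewrite -big_split; apply: eq_bigr => i _.
  rewrite /yD scalerDr scaler_sumr mulrnDl -mulrn_if_msub -sumrMnl.
  by congr (_ + _); [|apply: eq_bigr => i' _]; case: ifP; rewrite ?scaler0.
rewrite ycomp_yD_ye ycomp_ye_yD der -xi_u opprD addrACA.
set P := \sum_i (if a == madd c (munit i) then _ else _).
set D := \sum_i (if c == madd a (munit i) then _ else _) *+ c i.
set W := \sum_i \sum_i' (if a == madd (msub c i) (munit i') then _ else _) *+ c i.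
set B := if a == c then ccomp (uC M) (dC M) j l else 0.
rewrite [B + P]addrC addrKA [D + W]addrC addrKA d_u.
by rewrite (ccr_sum (fun i i' => X i *: xiC M i' j l)) subrr.
Qed.

End AModule.

Unset Implicit Arguments.

Theorem proposition2p9 (R : comRingType) (n : nat) (w : {perm 'I_n})
    (M : amod R w) :
  yhom (ye M) (-2) 4 /\
  (forall (j k : int) (a b : mi n), ysupcomm 1 (-2) (yD M) (ye M) j k a b = 0).
Proof.
split=> [|j k a b]; first exact: ye_hom.
rewrite /ysupcomm -signr_odd expr0 scale1r.
exact: yD_ye_commute.
Qed.
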